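(* Suppose $\tau\in(1,2)$ is the smallest $x\ge1$ such that $\omega'(x)=0$. Then $\tau>1.732$.
   Context: For $x\ge1$ let $\psi_1(x)=\frac32\int_0^{\pi/2}(1-x^{-2}\sin^2u)^{3/2}\,du$ and $\psi_2(x)=\frac32(1-x^{-2})^2\int_0^{\pi/2}\frac{\sin^4v}{\sqrt{1-(1-x^{-2})\sin^2v}}\,dv$, and $\omega(x)=\psi_2'(x)\psi_1(x)-\psi_2(x)\psi_1'(x)$. *)

From Stdlib Require Import Reals.
From Coquelicot Require Import Coquelicot.
Open Scope R_scope.

(* a^(3/2) for a >= 0, written as a * sqrt a *)
Definition pow32 (a : R) : R := a * sqrt a.

Definition psi1 (x : R) : R :=
  3 / 2 * RInt (fun u => pow32 (1 - / x ^ 2 * sin u ^ 2)) 0 (PI / 2).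

Definition psi2 (x : R) : R :=
  3 / 2 * (1 - / x ^ 2) ^ 2 *
  RInt (fun v => sin v ^ 4 / sqrt (1 - (1 - / x ^ 2) * sin v ^ 2)) 0 (PI / 2).

Definition omega (x : R) : R :=
  Derive psi2 x * psi1 x - psi2 x * Derive psi1 x.

(* Write Δ(u) = sqrt (1 - m sin² u) and let E, K be the complete elliptic
   integrals of Δ and 1/Δ over [0, π/2].  Integrating exact derivatives gives
   3 ∫Δ³ = 2 (2 - m) E - (1 - m) K, so psi1 and psi2 are linear in E and K
   evaluated at m = x⁻² and 1 - x⁻² respectively; with dE/dm = (E - K)/(2m) and
   dK/dm = (E/(1 - m) - K)/(2m), omega becomes a bilinear expression in
   E, K at m and at 1 - m which Legendre's relation
   E(m) K(1-m) + E(1-m) K(m) - K(m) K(1-m) = π/2 collapses to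
   omega(x) = 9π/8 (1/x - 1/x³).  Hence omega' vanishes on (1, 2) only at √3.
   Legendre's relation is proved by showing that its left-hand side has zero
   derivative on (0, 1) and is within O(√m) of π/2 as m → 0. *)

From Stdlib Require Import Reals Lra.
From Coquelicot Require Import Coquelicot.
Open Scope R_scope.

(* Equations between Coquelicot integrals are stated in a normed-module
   carrier; [ring] and [field] only recognise them once retyped at [R]. *)
Ltac R_eq := match goal with |- ?a = ?b => change (@eq R a b) end.

Lemma continuous_of_ex_derive (f : R -> R) x : ex_derive f x -> continuous f x.
Proof. exact (@ex_derive_continuous R_AbsRing R_NormedModule f x). Qed.

Lemma RInt_is_derive (g dg : R -> R) a b :
  (forall u, is_derive g u (dg u)) -> (forall u, continuous dg u) ->
  RInt dg a b = g b - g a.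
Proof.
  intros Hg Hdg; apply is_RInt_unique.
  apply (@is_RInt_derive R_CompleteNormedModule); intros; [apply Hg | apply Hdg].
Qed.

Lemma RInt_sub (f g : R -> R) a b :
  ex_RInt f a b -> ex_RInt g a b ->
  RInt (fun u => f u - g u) a b = RInt f a b - RInt g a b.
Proof. exact (RInt_minus (V := R_CompleteNormedModule) f g a b). Qed.

Lemma ex_RInt_sub (f g : R -> R) a b :
  ex_RInt f a b -> ex_RInt g a b -> ex_RInt (fun u => f u - g u) a b.
Proof. exact (ex_RInt_minus (V := R_CompleteNormedModule) f g a b). Qed.

Lemma RInt_lin2 (f g : R -> R) (α β a b : R) :
  ex_RInt f a b -> ex_RInt g a b ->
  RInt (fun u => α * f u + β * g u) a b = α * RInt f a b + β * RInt g a b.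
Proof.
  intros Hf Hg.
  rewrite (RInt_plus (V := R_CompleteNormedModule) (fun u => α * f u) (fun u => β * g u));
    try apply (ex_RInt_scal (V := R_CompleteNormedModule)); try assumption.
  now rewrite (RInt_scal (V := R_CompleteNormedModule) f),
    (RInt_scal (V := R_CompleteNormedModule) g).
Qed.

Lemma RInt_lin3 (f g h : R -> R) (α β γ a b : R) :
  ex_RInt f a b -> ex_RInt g a b -> ex_RInt h a b ->
  RInt (fun u => α * f u + β * g u + γ * h u) a b
  = α * RInt f a b + β * RInt g a b + γ * RInt h a b.
Proof.
  intros Hf Hg Hh.
  rewrite (RInt_ext _ (fun u => 1 * (α * f u + β * g u) + γ * h u)) by (intros; R_eq; ring).
  rewrite RInt_lin2; [| | exact Hh].
  - rewrite RInt_lin2 by assumption; R_eq; ring.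
  - apply (ex_RInt_plus (V := R_CompleteNormedModule) (fun u => α * f u));
      apply (ex_RInt_scal (V := R_CompleteNormedModule)); assumption.
Qed.

Lemma abs_RInt_0_PI2_le (f : R -> R) M :
  ex_RInt f 0 (PI / 2) -> (forall u, 0 <= u <= PI / 2 -> Rabs (f u) <= M) ->
  Rabs (RInt f 0 (PI / 2)) <= PI / 2 * M.
Proof.
  intros Hf HM; pose proof PI_RGT_0.
  replace (PI / 2) with (PI / 2 - 0) at 2 by ring.
  apply abs_RInt_le_const; [lra | exact Hf | exact HM].
Qed.

Lemma RInt_cos_0_PI2 : RInt cos 0 (PI / 2) = 1.
Proof.
  rewrite (RInt_is_derive sin cos), sin_PI2, sin_0; [R_eq; ring | |].
  - intros u; auto_derive; [exact I | R_eq; ring].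
  - intros u; apply continuous_of_ex_derive; auto_derive; exact I.
Qed.

Lemma RInt_1_0_PI2 : RInt (fun _ => 1) 0 (PI / 2) = PI / 2.
Proof.
  rewrite (RInt_const (V := R_CompleteNormedModule)).
  unfold scal; simpl; unfold mult; simpl; ring.
Qed.

(** * Complete elliptic integrals *)

Lemma sin_sqr_bounds u : 0 <= sin u ^ 2 <= 1.
Proof. pose proof (sin2_cos2 u); unfold Rsqr in *; split; nra. Qed.

Lemma cos_sqr u : cos u ^ 2 = 1 - sin u ^ 2.
Proof. pose proof (sin2_cos2 u); unfold Rsqr in *; nra. Qed.

Lemma elliptic_delta_pos m u : m < 1 -> 0 < 1 - m * sin u ^ 2.
Proof. pose proof (sin_sqr_bounds u); destruct (Rle_dec 0 m); nra. Qed.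

(* The [1 + - (m * ...)] clause matches the form in which [auto_derive]
   writes [1 - m * sin u ^ 2]. *)
Ltac pos_side :=
  repeat match goal with
  | |- True => exact I
  | |- _ /\ _ => split
  | |- _ <> 0 => apply Rgt_not_eq
  | |- _ > _ => red
  | |- 0 < 1 + - (?m * (sin ?u * (sin ?u * 1))) =>
      replace (1 + - (m * (sin u * (sin u * 1)))) with (1 - m * sin u ^ 2) by ring
  | |- 0 < _ * _ => apply Rmult_lt_0_compat
  | |- 0 < sqrt _ => apply sqrt_lt_R0
  | |- 0 < 1 - _ * sin _ ^ 2 => apply elliptic_delta_pos
  end; lra.

Ltac continuity_by_derive :=
  intros; apply continuous_of_ex_derive; unfold pow32; auto_derive; pos_side.

Lemma pow_SS_sqr x n : x ^ S (S n) = x ^ n * x ^ 2.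
Proof. simpl; ring. Qed.

Ltac reduce_sqr x Hx :=
  repeat match goal with
  | |- context [x ^ 2] => rewrite Hx
  | |- context [x ^ S (S (S ?n))] => rewrite (pow_SS_sqr x (S n))
  end.

Ltac set_delta m u r :=
  let Hw := fresh "Hw" in
  pose proof (elliptic_delta_pos m u ltac:(lra)) as Hw;
  pose proof (sqrt_lt_R0 _ Hw);
  pose proof (pow2_sqrt _ (Rlt_le _ _ Hw));
  set (r := sqrt (1 - m * sin u ^ 2)) in *.

(* Pointwise identities between rational functions of sin u, cos u and Δ:
   clear denominators, then eliminate cos² u = 1 - sin² u and Δ² = 1 - m sin² u. *)
Ltac elliptic_algebra m u :=
  R_eq; unfold pow32;
  try replace (1 + - (m * (sin u * (sin u * 1)))) with (1 - m * sin u ^ 2) by ring;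
  let r := fresh "r" in let s := fresh "s" in let c := fresh "c" in
  set_delta m u r;
  let Hc := fresh in pose proof (cos_sqr u) as Hc;
  set (s := sin u) in *; set (c := cos u) in *; clearbody r s c;
  match goal with Hr2 : r ^ 2 = _ |- _ =>
    field_simplify_eq; [reduce_sqr r Hr2; reduce_sqr c Hc; ring | lra ..] end.

Lemma ex_RInt_elliptic (g : R -> R) m a b :
  m < 1 -> (forall t, 0 < t -> continuous g t) ->
  ex_RInt (fun u => g (1 - m * sin u ^ 2)) a b.
Proof.
  intros Hm Hg; apply (@ex_RInt_continuous R_CompleteNormedModule); intros u _.
  apply (continuous_comp (fun u => 1 - m * sin u ^ 2) g).
  - apply continuous_of_ex_derive; auto_derive; exact I.
  - apply Hg, elliptic_delta_pos, Hm.
Qed.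

(* The parameter is m = k², not the modulus k. *)
Definition ellE m := RInt (fun u => sqrt (1 - m * sin u ^ 2)) 0 (PI / 2).
Definition ellK m := RInt (fun u => / sqrt (1 - m * sin u ^ 2)) 0 (PI / 2).
Definition ellE3 m := RInt (fun u => pow32 (1 - m * sin u ^ 2)) 0 (PI / 2).
Definition ellK3 m := RInt (fun u => / pow32 (1 - m * sin u ^ 2)) 0 (PI / 2).

Lemma ex_RInt_ellE m : m < 1 -> ex_RInt (fun u => sqrt (1 - m * sin u ^ 2)) 0 (PI / 2).
Proof. intros Hm; apply (ex_RInt_elliptic sqrt); [exact Hm | continuity_by_derive]. Qed.

Lemma ex_RInt_ellK m : m < 1 -> ex_RInt (fun u => / sqrt (1 - m * sin u ^ 2)) 0 (PI / 2).
Proof. intros Hm; apply (ex_RInt_elliptic (fun t => / sqrt t)); [exact Hm | continuity_by_derive]. Qed.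

Lemma ex_RInt_ellE3 m : m < 1 -> ex_RInt (fun u => pow32 (1 - m * sin u ^ 2)) 0 (PI / 2).
Proof. intros Hm; apply (ex_RInt_elliptic pow32); [exact Hm | continuity_by_derive]. Qed.

Lemma ex_RInt_ellK3 m : m < 1 -> ex_RInt (fun u => / pow32 (1 - m * sin u ^ 2)) 0 (PI / 2).
Proof. intros Hm; apply (ex_RInt_elliptic (fun t => / pow32 t)); [exact Hm | continuity_by_derive]. Qed.

(* d/du [m sin u cos u Δ] = 3 Δ³ + 2 (m - 2) Δ + (1 - m) / Δ, and the bracket
   vanishes at both ends. *)
Lemma ellE3_reduction m :
  m < 1 -> 3 * ellE3 m + 2 * (m - 2) * ellE m + (1 - m) * ellK m = 0.
Proof.
  intros Hm; unfold ellE3, ellE, ellK.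
  rewrite <- RInt_lin3; [| apply ex_RInt_ellE3, Hm | apply ex_RInt_ellE, Hm | apply ex_RInt_ellK, Hm].
  rewrite (RInt_is_derive (fun u => m * sin u * cos u * sqrt (1 - m * sin u ^ 2))).
  - rewrite cos_PI2, sin_0; ring.
  - intros u; auto_derive; [pos_side | elliptic_algebra m u].
  - continuity_by_derive.
Qed.

(* d/du [m sin u cos u / Δ] = Δ + (m - 1) / Δ³. *)
Lemma ellK3_eq m : m < 1 -> (1 - m) * ellK3 m = ellE m.
Proof.
  intros Hm.
  enough (H : 1 * ellE m + (m - 1) * ellK3 m = 0) by lra.
  unfold ellE, ellK3.
  rewrite <- RInt_lin2; [| apply ex_RInt_ellE, Hm | apply ex_RInt_ellK3, Hm].
  rewrite (RInt_is_derive (fun u => m * sin u * cos u / sqrt (1 - m * sin u ^ 2))).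
  - rewrite cos_PI2, sin_0; unfold Rdiv; ring.
  - intros u; auto_derive; [pos_side | elliptic_algebra m u].
  - continuity_by_derive.
Qed.

(** * Derivatives with respect to the parameter *)

Lemma continuity_2d_pt_elliptic (h : R -> R) m v :
  continuity_pt h (1 - m * sin v ^ 2) ->
  continuity_2d_pt (fun m v => - sin v ^ 2 * h (1 - m * sin v ^ 2)) m v.
Proof.
  intros Hh.
  assert (Hsin2 : forall m v, continuity_2d_pt (fun _ v => sin v ^ 2) m v).
  { intros m' v'.
    apply (continuity_1d_2d_pt_comp (fun z => sin z ^ 2) (fun _ v => v));
      [| apply continuity_2d_pt_id2].
    apply continuity_pt_filterlim, continuous_of_ex_derive; auto_derive; exact I. }
  apply continuity_2d_pt_mult; [apply continuity_2d_pt_opp, Hsin2 |].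
  apply (continuity_1d_2d_pt_comp h (fun m v => 1 - m * sin v ^ 2)); [exact Hh |].
  apply continuity_2d_pt_minus; [apply continuity_2d_pt_const |].
  apply continuity_2d_pt_mult; [apply continuity_2d_pt_id1 | apply Hsin2].
Qed.

Lemma is_derive_RInt_elliptic (g dg : R -> R) m :
  m < 1 ->
  (forall t, 0 < t -> is_derive g t (dg t)) ->
  (forall t, 0 < t -> continuous dg t) ->
  is_derive (fun m => RInt (fun u => g (1 - m * sin u ^ 2)) 0 (PI / 2)) m
    (RInt (fun u => - sin u ^ 2 * dg (1 - m * sin u ^ 2)) 0 (PI / 2)).
Proof.
  intros Hm Hg Hdg.
  set (f := fun m u => g (1 - m * sin u ^ 2)).
  assert (Hpartial : forall y t, y < 1 ->
            is_derive (fun z => f z t) y (- sin t ^ 2 * dg (1 - y * sin t ^ 2))).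
  { intros y t Hy.
    apply (is_derive_comp g (fun z => 1 - z * sin t ^ 2)).
    - apply Hg, elliptic_delta_pos, Hy.
    - auto_derive; [exact I | ring]. }
  assert (Hnear : locally m (fun y => y < 1)) by exact (open_lt 1 m Hm).
  replace (RInt (fun u => - sin u ^ 2 * dg (1 - m * sin u ^ 2)) 0 (PI / 2))
    with (RInt (fun t => Derive (fun z => f z t) m) 0 (PI / 2))
    by (apply RInt_ext; intros t _; apply is_derive_unique, Hpartial, Hm).
  apply (is_derive_RInt_param f).
  - apply (filter_imp (fun y => y < 1)); [| exact Hnear].
    intros y Hy t _; eexists; apply Hpartial, Hy.
  - intros t _.
    apply (continuity_2d_pt_ext_loc (fun m v => - sin v ^ 2 * dg (1 - m * sin v ^ 2))).
    + exists (mkposreal _ (proj2 (Rlt_0_minus m 1) Hm)); simpl; intros y v Hy _.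
      symmetry; apply is_derive_unique, Hpartial.
      apply Rabs_def2 in Hy; lra.
    + apply continuity_2d_pt_elliptic, continuity_pt_filterlim, Hdg.
      apply elliptic_delta_pos, Hm.
  - apply (filter_imp (fun y => y < 1)); [| exact Hnear]; intros y Hy.
    apply (ex_RInt_elliptic g); [exact Hy |].
    intros t Ht; apply continuous_of_ex_derive; eexists; apply Hg, Ht.
Qed.

Lemma is_derive_ellE m : 0 < m < 1 -> is_derive ellE m ((ellE m - ellK m) / (2 * m)).
Proof.
  intros Hm.
  replace ((ellE m - ellK m) / (2 * m))
    with (RInt (fun u => - sin u ^ 2 * / (2 * sqrt (1 - m * sin u ^ 2))) 0 (PI / 2)).
  - apply (is_derive_RInt_elliptic sqrt (fun t => / (2 * sqrt t))); [lra | |].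
    + intros t Ht; auto_derive; [pos_side | R_eq; field; pos_side].
    + continuity_by_derive.
  - rewrite (RInt_ext _ (fun u => / (2 * m) * sqrt (1 - m * sin u ^ 2)
                                + - / (2 * m) * / sqrt (1 - m * sin u ^ 2)))
      by (intros u _; elliptic_algebra m u).
    rewrite RInt_lin2; [| apply ex_RInt_ellE; lra | apply ex_RInt_ellK; lra].
    unfold ellE, ellK; R_eq; field; lra.
Qed.

Lemma is_derive_ellK m :
  0 < m < 1 -> is_derive ellK m ((ellE m / (1 - m) - ellK m) / (2 * m)).
Proof.
  intros Hm.
  replace ((ellE m / (1 - m) - ellK m) / (2 * m))
    with (RInt (fun u => - sin u ^ 2 * - / (2 * pow32 (1 - m * sin u ^ 2))) 0 (PI / 2)).
  - apply (is_derive_RInt_elliptic (fun t => / sqrt t) (fun t => - / (2 * pow32 t))); [lra | |].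
    + intros t Ht; unfold pow32; auto_derive; [pos_side |].
      rewrite sqrt_sqrt by lra; R_eq; field; pos_side.
    + continuity_by_derive.
  - rewrite (RInt_ext _ (fun u => / (2 * m) * / pow32 (1 - m * sin u ^ 2)
                                + - / (2 * m) * / sqrt (1 - m * sin u ^ 2)))
      by (intros u _; elliptic_algebra m u).
    rewrite RInt_lin2; [| apply ex_RInt_ellK3; lra | apply ex_RInt_ellK; lra].
    rewrite <- (ellK3_eq m) by lra.
    unfold ellK3, ellK; R_eq; field; lra.
Qed.

(** * Legendre's relation *)

Definition legendre m :=
  ellE m * ellK (1 - m) + ellE (1 - m) * ellK m - ellK m * ellK (1 - m).

Lemma is_derive_legendre m : 0 < m < 1 -> is_derive legendre m 0.
Proof.
  intros Hm.
  assert (HE := is_derive_ellE m Hm); assert (HK := is_derive_ellK m Hm).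
  assert (HE' := is_derive_ellE (1 - m) ltac:(lra)).
  assert (HK' := is_derive_ellK (1 - m) ltac:(lra)).
  unfold legendre; auto_derive; [repeat split; eexists; eassumption |].
  replace (1 + - m) with (1 - m) by ring.
  change (Derive (fun x => ellE x)) with (Derive ellE).
  change (Derive (fun x => ellK x)) with (Derive ellK).
  rewrite (is_derive_unique _ _ _ HE), (is_derive_unique _ _ _ HK),
    (is_derive_unique _ _ _ HE'), (is_derive_unique _ _ _ HK').
  R_eq; field; lra.
Qed.

Lemma legendre_const m : 0 < m < 1 -> legendre m = legendre (1 / 2).
Proof.
  intros Hm.
  destruct (Rtotal_order m (1 / 2)) as [Hlt | [-> | Hgt]]; [| reflexivity |].
  - apply (eq_is_derive (V := R_NormedModule)); [| exact Hlt].
    intros t Ht; apply is_derive_legendre; lra.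
  - symmetry; apply (eq_is_derive (V := R_NormedModule)); [| exact Hgt].
    intros t Ht; apply is_derive_legendre; lra.
Qed.

Lemma ellE_sub_ellK_bound p : 0 < p <= 1 / 2 -> Rabs (ellE p - ellK p) <= PI * p.
Proof.
  intros Hp; unfold ellE, ellK.
  rewrite <- RInt_sub; [| apply ex_RInt_ellE; lra | apply ex_RInt_ellK; lra].
  replace (PI * p) with (PI / 2 * (2 * p)) by (R_eq; field).
  apply abs_RInt_0_PI2_le; [apply ex_RInt_sub; [apply ex_RInt_ellE | apply ex_RInt_ellK]; lra |].
  intros u _.
  pose proof (sin_sqr_bounds u); set_delta p u r; set (S := sin u ^ 2) in *; clearbody r S.
  assert (Hinv : 0 < / r <= 2).
  { split; [apply Rinv_0_lt_compat; lra |].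
    rewrite <- (Rinv_inv 2); apply Rinv_le_contravar; nra. }
  replace (r - / r) with (- (p * S * / r)) by (field_simplify_eq; [rewrite H1; ring | lra]).
  assert (HpS : 0 <= p * S <= p) by nra.
  rewrite Rabs_Ropp, Rabs_right; [nra | apply Rle_ge, Rmult_le_pos; lra].
Qed.

Lemma ellK_near_PI2 p : 0 < p <= 1 / 2 -> Rabs (ellK p - PI / 2) <= PI * p.
Proof.
  intros Hp.
  replace (ellK p - PI / 2) with (RInt (fun u => / sqrt (1 - p * sin u ^ 2) - 1) 0 (PI / 2))
    by (rewrite RInt_sub, RInt_1_0_PI2; [reflexivity | apply ex_RInt_ellK; lra | apply ex_RInt_const]).
  replace (PI * p) with (PI / 2 * (2 * p)) by (R_eq; field).
  apply abs_RInt_0_PI2_le; [apply ex_RInt_sub; [apply ex_RInt_ellK; lra | apply ex_RInt_const] |].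
  intros u _.
  pose proof (sin_sqr_bounds u); set_delta p u r; set (S := sin u ^ 2) in *; clearbody r S.
  assert (Hinv : 0 < / r <= 2).
  { split; [apply Rinv_0_lt_compat; lra |].
    rewrite <- (Rinv_inv 2); apply Rinv_le_contravar; nra. }
  assert (H1r : 0 <= 1 - r <= p) by nra.
  replace (/ r - 1) with ((1 - r) * / r) by (field; lra).
  rewrite Rabs_right by (apply Rle_ge, Rmult_le_pos; lra); nra.
Qed.

Lemma ellK_complement_bound p : 0 < p <= 1 / 2 -> sqrt p * Rabs (ellK (1 - p)) <= PI / 2.
Proof.
  intros Hp.
  assert (Hs : 0 < sqrt p) by (apply sqrt_lt_R0; lra).
  rewrite Rmult_comm; apply Rmult_le_reg_r with (/ sqrt p); [apply Rinv_0_lt_compat, Hs |].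
  rewrite Rmult_assoc, Rinv_r, Rmult_1_r by lra.
  unfold ellK; apply abs_RInt_0_PI2_le; [apply ex_RInt_ellK; lra |].
  intros u _.
  pose proof (sin_sqr_bounds u); set_delta (1 - p) u r.
  rewrite Rabs_right by (apply Rle_ge, Rlt_le, Rinv_0_lt_compat; lra).
  apply Rinv_le_contravar; [exact Hs |].
  apply sqrt_le_1_alt; nra.
Qed.

Lemma ellE_complement_bound p :
  0 < p <= 1 / 2 -> Rabs (ellE (1 - p) - 1) <= PI / 2 * sqrt p.
Proof.
  intros Hp.
  assert (Hcos : ex_RInt cos 0 (PI / 2)).
  { apply (@ex_RInt_continuous R_CompleteNormedModule); continuity_by_derive. }
  replace (ellE (1 - p) - 1)
    with (RInt (fun u => sqrt (1 - (1 - p) * sin u ^ 2) - cos u) 0 (PI / 2))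
    by (rewrite RInt_sub, RInt_cos_0_PI2; [reflexivity | apply ex_RInt_ellE; lra | exact Hcos]).
  apply abs_RInt_0_PI2_le; [apply ex_RInt_sub; [apply ex_RInt_ellE; lra | exact Hcos] |].
  intros u Hu.
  assert (Hc : 0 <= cos u) by (apply cos_ge_0; lra).
  pose proof (sin_sqr_bounds u); pose proof (cos_sqr u); set_delta (1 - p) u r.
  assert (Hcr : cos u <= r) by nra.
  rewrite Rabs_right by lra.
  rewrite <- (sqrt_pow2 (r - cos u)) by lra.
  apply sqrt_le_1_alt; nra.
Qed.

Lemma legendre_near_0 p : 0 < p <= 1 / 2 -> Rabs (legendre p - PI / 2) <= 20 * sqrt p.
Proof.
  intros Hp.
  assert (Hs : 0 < sqrt p) by (apply sqrt_lt_R0; lra).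
  assert (Hs2 : sqrt p * sqrt p = p) by (apply sqrt_sqrt; lra).
  assert (Hs1 : sqrt p <= 1) by (rewrite <- sqrt_1; apply sqrt_le_1_alt; lra).
  assert (Hps : p <= sqrt p) by nra.
  pose proof PI_RGT_0; pose proof PI_4.
  assert (HK : Rabs (ellK p) <= PI).
  { pose proof (ellK_near_PI2 p Hp) as Hnear.
    pose proof (Rabs_triang_inv (ellK p) (PI / 2)) as Htri.
    rewrite (Rabs_right (PI / 2)) in Htri by lra.
    assert (PI * p <= PI / 2) by nra; lra. }
  assert (Hab : Rabs (ellE p - ellK p) * Rabs (ellK (1 - p)) <= PI * sqrt p * (PI / 2)).
  { apply Rle_trans with (PI * p * Rabs (ellK (1 - p))).
    - apply Rmult_le_compat_r; [apply Rabs_pos | apply ellE_sub_ellK_bound, Hp].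
    - replace (PI * p * Rabs (ellK (1 - p)))
        with (PI * sqrt p * (sqrt p * Rabs (ellK (1 - p))))
        by (rewrite <- Rmult_assoc, (Rmult_assoc PI), Hs2; reflexivity).
      apply Rmult_le_compat_l; [nra | apply ellK_complement_bound, Hp]. }
  assert (Hck : Rabs (ellE (1 - p) - 1) * Rabs (ellK p) <= PI / 2 * sqrt p * PI).
  { apply Rmult_le_compat; [apply Rabs_pos | apply Rabs_pos | |];
      [apply ellE_complement_bound, Hp | exact HK]. }
  pose proof (ellK_near_PI2 p Hp).
  replace (legendre p - PI / 2) with
    ((ellE p - ellK p) * ellK (1 - p) + (ellE (1 - p) - 1) * ellK p + (ellK p - PI / 2))
    by (unfold legendre; ring).
  eapply Rle_trans; [apply Rabs_triang |].
  eapply Rle_trans; [apply Rplus_le_compat_r, Rabs_triang |].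
  rewrite !Rabs_mult.
  assert (PI * PI * sqrt p <= 16 * sqrt p) by (apply Rmult_le_compat_r; nra).
  assert (PI * p <= 4 * sqrt p) by (apply Rmult_le_compat; lra).
  lra.
Qed.

Lemma legendre_relation m : 0 < m < 1 -> legendre m = PI / 2.
Proof.
  intros Hm; rewrite legendre_const by exact Hm.
  destruct (Req_dec (legendre (1 / 2)) (PI / 2)) as [E | Hne]; [exact E | exfalso].
  set (d := Rabs (legendre (1 / 2) - PI / 2)).
  assert (Hd : 0 < d) by (apply Rabs_pos_lt; lra).
  set (p := Rmin (1 / 2) ((d / 40) ^ 2)).
  assert (Hp : 0 < p <= 1 / 2).
  { split; [apply Rmin_pos; [lra | apply pow_lt; lra] | apply Rmin_l]. }
  assert (Hsp : sqrt p <= d / 40).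
  { rewrite <- (sqrt_pow2 (d / 40)) by lra; apply sqrt_le_1_alt, Rmin_r. }
  pose proof (legendre_near_0 p Hp) as Hnear.
  rewrite (legendre_const p) in Hnear by lra; fold d in Hnear; lra.
Qed.

(** * The functions psi1, psi2 and omega *)

Definition Psi1 m := (2 * (2 - m) * ellE m - (1 - m) * ellK m) / 2.
Definition Psi2 m := ((2 + m) * ellK m - 2 * (1 + m) * ellE m) / 2.
Definition dPsi1 m := 3 * ((1 - 2 * m) * ellE m - (1 - m) * ellK m) / (4 * m).
Definition dPsi2 m := 3 * ((1 - m) * ellK m + (2 * m - 1) * ellE m) / (4 * (1 - m)).

Lemma inv_sqr_bounds x : 1 < x -> 0 < / x ^ 2 < 1.
Proof.
  intros Hx; split; [apply Rinv_0_lt_compat; nra |].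
  rewrite <- Rinv_1; apply Rinv_lt_contravar; nra.
Qed.

Lemma psi1_eq x : 1 < x -> psi1 x = Psi1 (/ x ^ 2).
Proof.
  intros Hx; pose proof (inv_sqr_bounds x Hx).
  pose proof (ellE3_reduction (/ x ^ 2) ltac:(lra)).
  unfold psi1, Psi1; fold (ellE3 (/ x ^ 2)); lra.
Qed.

Lemma RInt_sin4_div_delta m :
  0 < m < 1 ->
  m ^ 2 * RInt (fun v => sin v ^ 4 / sqrt (1 - m * sin v ^ 2)) 0 (PI / 2)
  = ellK m - 2 * ellE m + ellE3 m.
Proof.
  intros Hm.
  rewrite (RInt_ext _ (fun u => / m ^ 2 * / sqrt (1 - m * sin u ^ 2)
                              + - 2 / m ^ 2 * sqrt (1 - m * sin u ^ 2)
                              + / m ^ 2 * pow32 (1 - m * sin u ^ 2)))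
    by (intros u _; elliptic_algebra m u).
  rewrite RInt_lin3; [| apply ex_RInt_ellK; lra | apply ex_RInt_ellE; lra | apply ex_RInt_ellE3; lra].
  unfold ellK, ellE, ellE3; R_eq; field; lra.
Qed.

Lemma psi2_eq x : 1 < x -> psi2 x = Psi2 (1 - / x ^ 2).
Proof.
  intros Hx; pose proof (inv_sqr_bounds x Hx).
  pose proof (ellE3_reduction (1 - / x ^ 2) ltac:(lra)).
  unfold psi2, Psi2; rewrite Rmult_assoc, RInt_sin4_div_delta by lra; lra.
Qed.

Lemma is_derive_Psi1 m : 0 < m < 1 -> is_derive Psi1 m (dPsi1 m).
Proof.
  intros Hm; pose proof (is_derive_ellE m Hm) as HE; pose proof (is_derive_ellK m Hm) as HK.
  unfold Psi1; auto_derive; [repeat split; eexists; eassumption |].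
  change (Derive (fun x => ellE x)) with (Derive ellE).
  change (Derive (fun x => ellK x)) with (Derive ellK).
  rewrite (is_derive_unique _ _ _ HE), (is_derive_unique _ _ _ HK).
  unfold dPsi1; R_eq; field; lra.
Qed.

Lemma is_derive_Psi2 m : 0 < m < 1 -> is_derive Psi2 m (dPsi2 m).
Proof.
  intros Hm; pose proof (is_derive_ellE m Hm) as HE; pose proof (is_derive_ellK m Hm) as HK.
  unfold Psi2; auto_derive; [repeat split; eexists; eassumption |].
  change (Derive (fun x => ellE x)) with (Derive ellE).
  change (Derive (fun x => ellK x)) with (Derive ellK).
  rewrite (is_derive_unique _ _ _ HE), (is_derive_unique _ _ _ HK).
  unfold dPsi2; R_eq; field; lra.
Qed.

Lemma Psi_wronskian m :
  0 < m < 1 -> dPsi2 (1 - m) * Psi1 m + Psi2 (1 - m) * dPsi1 m = 9 * PI / 16 * (1 - m) / m.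
Proof.
  intros Hm; replace PI with (2 * legendre m) by (rewrite legendre_relation by exact Hm; field).
  unfold legendre, dPsi1, dPsi2, Psi1, Psi2; R_eq; field; lra.
Qed.

Lemma is_derive_psi1 x : 1 < x -> is_derive psi1 x (- 2 / x ^ 3 * dPsi1 (/ x ^ 2)).
Proof.
  intros Hx.
  apply (is_derive_ext_loc (fun y => Psi1 (/ y ^ 2))).
  - apply (filter_imp (fun y => 1 < y)); [| exact (open_gt 1 x Hx)].
    intros y Hy; symmetry; apply psi1_eq, Hy.
  - apply (is_derive_comp Psi1 (fun y => / y ^ 2)).
    + apply is_derive_Psi1, inv_sqr_bounds, Hx.
    + auto_derive; [pos_side | R_eq; field; pos_side].
Qed.

Lemma is_derive_psi2 x : 1 < x -> is_derive psi2 x (2 / x ^ 3 * dPsi2 (1 - / x ^ 2)).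
Proof.
  intros Hx; pose proof (inv_sqr_bounds x Hx).
  apply (is_derive_ext_loc (fun y => Psi2 (1 - / y ^ 2))).
  - apply (filter_imp (fun y => 1 < y)); [| exact (open_gt 1 x Hx)].
    intros y Hy; symmetry; apply psi2_eq, Hy.
  - apply (is_derive_comp Psi2 (fun y => 1 - / y ^ 2)).
    + apply is_derive_Psi2; lra.
    + auto_derive; [pos_side | R_eq; field; pos_side].
Qed.

Lemma omega_eq x : 1 < x -> omega x = 9 * PI / 8 * (/ x - / x ^ 3).
Proof.
  intros Hx; pose proof (inv_sqr_bounds x Hx) as Hm.
  unfold omega.
  rewrite (is_derive_unique _ _ _ (is_derive_psi1 x Hx)),
    (is_derive_unique _ _ _ (is_derive_psi2 x Hx)), psi1_eq, psi2_eq by exact Hx.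
  transitivity (2 / x ^ 3 * (dPsi2 (1 - / x ^ 2) * Psi1 (/ x ^ 2)
                             + Psi2 (1 - / x ^ 2) * dPsi1 (/ x ^ 2))); [unfold Rdiv; ring |].
  rewrite Psi_wronskian by exact Hm.
  field; lra.
Qed.

Lemma Derive_omega x : 1 < x -> Derive omega x = 9 * PI / 8 * (3 - x ^ 2) / x ^ 4.
Proof.
  intros Hx.
  rewrite (Derive_ext_loc _ (fun y => 9 * PI / 8 * (/ y - / y ^ 3))).
  - apply is_derive_unique; auto_derive; [pos_side | R_eq; field; pos_side].
  - apply (filter_imp (fun y => 1 < y)); [| exact (open_gt 1 x Hx)].
    intros y Hy; apply omega_eq, Hy.
Qed.

Theorem mainTheorem10 (tau : R) :
  1 < tau < 2 ->
  Derive omega tau = 0 ->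
  (forall x : R, 1 < x < tau -> Derive omega x <> 0) ->
  tau > 1732 / 1000.
Proof.
  intros Htau Hcrit _.
  rewrite Derive_omega in Hcrit by lra.
  assert (Hsq : tau ^ 2 = 3).
  { pose proof PI_RGT_0.
    apply Rmult_integral in Hcrit as [Hnum | Hden].
    - apply Rmult_integral in Hnum as [Hpi | Hsq]; lra.
    - exfalso; apply (Rinv_neq_0_compat (tau ^ 4)); [apply pow_nonzero; lra | exact Hden]. }
  nra.
Qed.
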